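(* Let $n=2$, assume Assumptions A and B and $c_1^2+c_2^2>0$, and let $S$ be a solution of (IVP) on $[r_0,\infty)$ with $s_\infty=\lim_{r\to\infty}S(r)$. Then: (i) if $c_1\le0$ and $c_2\ge0$, then $s_\infty=1$; (ii) if $c_1\ge0$ and $c_2\le0$, then $s_\infty=0$; (iii) if $c_1,c_2<0$, then $s_\infty=s^*$; (iv) if $c_1,c_2>0$, then $s_\infty\in\{0,1,s^*\}$.
   Context: For $i=1,2$, $g_i(s)=a^{(i)}_0+a^{(i)}_1s^{\alpha^{(i)}_1}+\dots+a^{(i)}_{N_i}s^{\alpha^{(i)}_{N_i}}$ ($s\ge0$) with $N_i\ge0$, $a^{(i)}_0>0$, $a^{(i)}_j\ge0$, real $0<\alpha^{(i)}_1<\dots<\alpha^{(i)}_{N_i}$; $G_i(u)=g_i(|u|)u$ for $u\in\mathbb R$. Assumption A: $f_1,f_2\in C([0,1])\cap C^1((0,1))$, $f_1(0)=0$, $f_2(1)=0$, $f_1'>0$, $f_2'<0$ on $(0,1)$. Assumption B: $p_c'\in C^1((0,1))$, $p_c'>0$ on $(0,1)$. $F_i(S)=1/(p_c'(S)f_i(S))$. (IVP) with dimension $n$: $S'(r)=G_2(c_2r^{1-n})F_2(S)-G_1(c_1r^{1-n})F_1(S)$ for $r>r_0$, $S(r_0)=s_0\in(0,1)$, $0<S<1$. The limit $s_\infty$ exists for any solution on $[r_0,\infty)$. $f=f_1/f_2$ is a strictly increasing bijection $(0,1)\to(0,\infty)$; when $c_1c_2>0$, $s^*=f^{-1}\big(c_1a^{(1)}_0/(c_2a^{(2)}_0)\big)\in(0,1)$.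 *)

From Stdlib Require Import Reals Lra.
Open Scope R_scope.

Definition rpow (s alpha : R) : R := if Rle_dec s 0 then 0 else Rpower s alpha.

Fixpoint psum (f : nat -> R) (N : nat) : R :=
  match N with
  | O => 0
  | S k => psum f k + f (S k)
  end.

Definition gfun (N : nat) (a alpha : nat -> R) (s : R) : R :=
  a O + psum (fun j => a j * rpow s (alpha j)) N.

Definition g_admissible (N : nat) (a alpha : nat -> R) : Prop :=
  0 < a O /\
  (forall j, (1 <= j <= N)%nat -> 0 <= a j) /\
  (forall j, (1 <= j <= N)%nat -> 0 < alpha j) /\
  (forall j, (1 <= j < N)%nat -> alpha j < alpha (S j)).

Definition Gfun (N : nat) (a alpha : nat -> R) (u : R) : R :=
  gfun N a alpha (Rabs u) * u.

Definition cont_on_01 (f : R -> R) : Prop :=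
  forall x, 0 <= x <= 1 -> forall eps, 0 < eps ->
    exists delta, 0 < delta /\
      forall y, 0 <= y <= 1 -> Rabs (y - x) < delta -> Rabs (f y - f x) < eps.

Definition C1_on_open01_with (f df : R -> R) : Prop :=
  forall x, 0 < x < 1 -> derivable_pt_lim f x (df x) /\ continuity_pt df x.

Definition AssumptionA (f1 f2 : R -> R) : Prop :=
  cont_on_01 f1 /\ cont_on_01 f2 /\
  (exists df1 df2 : R -> R,
     C1_on_open01_with f1 df1 /\ C1_on_open01_with f2 df2 /\
     (forall x, 0 < x < 1 -> 0 < df1 x) /\
     (forall x, 0 < x < 1 -> df2 x < 0)) /\
  f1 0 = 0 /\ f2 1 = 0.

Definition AssumptionB (pc dpc : R -> R) : Prop :=
  (forall x, 0 < x < 1 -> derivable_pt_lim pc x (dpc x)) /\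
  (exists ddpc : R -> R, C1_on_open01_with dpc ddpc) /\
  (forall x, 0 < x < 1 -> 0 < dpc x).

Definition Ffun (dpc fi : R -> R) (s : R) : R := 1 / (dpc s * fi s).

Definition IVP_solution_n2
  (N1 N2 : nat) (a1 al1 a2 al2 : nat -> R) (f1 f2 dpc : R -> R)
  (c1 c2 r0 s0 : R) (S : R -> R) : Prop :=
  S r0 = s0 /\
  (forall r, r0 <= r -> 0 < S r < 1) /\
  (forall eps, 0 < eps -> exists delta, 0 < delta /\
     forall r, r0 <= r < r0 + delta -> Rabs (S r - s0) < eps) /\
  (forall r, r0 < r ->
     derivable_pt_lim S r
       (Gfun N2 a2 al2 (c2 * / r) * Ffun dpc f2 (S r)
        - Gfun N1 a1 al1 (c1 * / r) * Ffun dpc f1 (S r))).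

Definition lim_at_infty (S : R -> R) (l : R) : Prop :=
  forall eps, 0 < eps -> exists R0, forall r, R0 <= r -> Rabs (S r - l) < eps.

From Stdlib Require Import Reals Lra Lia.
From Coquelicot Require Import Coquelicot.
Open Scope R_scope.

(* Writing g_i^r = g_i(|c_i / r|), the equation reads S' = P(r) / (r Q(r)) with
   the flux   P = c_2 g_2^r f_1(S) - c_1 g_1^r f_2(S)   and the mobility
   Q = p_c'(S) f_1(S) f_2(S) > 0.  Since g_i^r -> a_0^(i), the flux tends to
   pi(s) = c_2 a_0^(2) f_1(s) - c_1 a_0^(1) f_2(s), where s is the limit of S.
   Two facts drive the proof, each established for an abstract equation
   S' = P / (r Q) with S confined to (0,1):
   - if P is eventually positive, S eventually increases, so s > 0
     (and symmetrically, P eventually negative gives s < 1);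
   - if P -> pi <> 0 while Q stays bounded, then S' >= k / r for some k > 0,
     so S grows like k ln r, contradicting 0 < S < 1.
   For the concrete equation Q stays bounded when 0 < s < 1, so an interior
   limit balances the flux, pi(s) = 0; as f_1 / f_2 is strictly increasing,
   this pins s down to s*.  The four cases then follow from the signs of
   pi(0) = -c_1 a_0^(1) f_2(0) and pi(1) = c_2 a_0^(2) f_1(1). *)

Lemma is_lim_mult_fin (f g : R -> R) (lf lg : R) :
  is_lim f p_infty lf -> is_lim g p_infty lg ->
  is_lim (fun r => f r * g r) p_infty (lf * lg).
Proof. intros Hf Hg. exact (is_lim_mult f g p_infty lf lg Hf Hg I). Qed.

Lemma lim_at_infty_is_lim (u : R -> R) (l : R) :
  lim_at_infty u l <-> is_lim u p_infty l.
Proof.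
  rewrite <- is_lim_spec. split.
  - intros H eps. destruct (H eps (cond_pos eps)) as [M HM].
    exists M. intros r Hr. apply HM. lra.
  - intros H eps Heps. destruct (H (mkposreal eps Heps)) as [M HM].
    exists (M + 1). intros r Hr. apply HM. lra.
Qed.

Lemma is_lim_band (u : R -> R) (l e : R) :
  is_lim u p_infty l -> 0 < e ->
  Rbar_locally p_infty (fun r => l - e < u r < l + e).
Proof.
  intros H He. apply is_lim_spec in H. destruct (H (mkposreal e He)) as [M HM].
  exists M. intros r Hr. specialize (HM r Hr). simpl in HM.
  apply Rabs_def2 in HM. lra.
Qed.

Lemma is_lim_eventually_pos (u : R -> R) (l : R) :
  is_lim u p_infty l -> 0 < l -> Rbar_locally p_infty (fun r => 0 < u r).
Proof.
  intros H Hl. apply (filter_imp (fun r => l - l / 2 < u r < l + l / 2));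
    [intros r Hr; lra | apply is_lim_band; [exact H | lra]].
Qed.

Lemma is_lim_eventually_neg (u : R -> R) (l : R) :
  is_lim u p_infty l -> l < 0 -> Rbar_locally p_infty (fun r => u r < 0).
Proof.
  intros H Hl. apply (filter_imp (fun r => l - - l / 2 < u r < l + - l / 2));
    [intros r Hr; lra | apply is_lim_band; [exact H | lra]].
Qed.

Lemma nondecreasing_of_deriv (S D : R -> R) (R0 : R) :
  (forall r, R0 < r -> derivable_pt_lim S r (D r)) ->
  (forall r, R0 < r -> 0 <= D r) ->
  forall x y, R0 < x -> x <= y -> S x <= S y.
Proof.
  intros Hder Hpos x y Hx Hxy.
  destruct (Req_dec x y) as [<- | Hne]; [lra |].
  destruct (MVT_cor2 S D x y) as [c [Hc Hcxy]]; [lra | intros; apply Hder; lra |].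
  assert (0 <= D c * (y - x)) by (apply Rmult_le_pos; [apply Hpos |]; lra).
  lra.
Qed.

Lemma nondecreasing_le_lim (S D : R -> R) (R0 s : R) :
  (forall r, R0 < r -> derivable_pt_lim S r (D r)) ->
  (forall r, R0 < r -> 0 <= D r) ->
  is_lim S p_infty s -> forall x, R0 < x -> S x <= s.
Proof.
  intros Hder Hpos Hlim x Hx.
  apply (is_lim_le_loc (fun _ => S x) S p_infty (S x) s); [| apply is_lim_const | exact Hlim].
  exists x. intros r Hr. apply (nondecreasing_of_deriv S D R0); auto; lra.
Qed.

Lemma log_growth (S D : R -> R) (R1 k : R) :
  0 < R1 ->
  (forall r, R1 <= r -> derivable_pt_lim S r (D r)) ->
  (forall r, R1 <= r -> k / r <= D r) ->
  forall y, R1 <= y -> k * (ln y - ln R1) <= S y - S R1.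
Proof.
  intros HR1 Hder Hbound y Hy.
  destruct (Req_dec R1 y) as [<- | Hne]; [lra |].
  destruct (MVT_cor2 (fun r => S r - k * ln r) (fun r => D r - k / r) R1 y)
    as [c [Hc Hcy]]; [lra | |].
  - intros c Hc. apply derivable_pt_lim_minus; [apply Hder; lra |].
    replace (k / c) with (0 * ln c + k * / c) by (unfold Rdiv; ring).
    apply (derivable_pt_lim_mult (fct_cte k) ln);
      [apply derivable_pt_lim_const | apply derivable_pt_lim_ln; lra].
  - assert (0 <= (D c - k / c) * (y - R1))
      by (apply Rmult_le_pos; [pose proof (Hbound c ltac:(lra)) |]; lra).
    lra.
Qed.

Lemma no_log_growth_in_01 (S D : R -> R) (R1 k : R) :
  0 < R1 -> 0 < k ->
  (forall r, R1 <= r -> derivable_pt_lim S r (D r)) ->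
  (forall r, R1 <= r -> k / r <= D r) ->
  ~ (forall r, R1 <= r -> 0 < S r < 1).
Proof.
  intros HR1 Hk Hder Hbound Hin.
  set (y := R1 * exp (2 / k)).
  assert (Hexp : 1 < exp (2 / k)).
  { rewrite <- exp_0. apply exp_increasing. apply Rdiv_lt_0_compat; lra. }
  assert (Hln : ln y - ln R1 = 2 / k).
  { unfold y. rewrite ln_mult, ln_exp by (try apply exp_pos; lra). ring. }
  assert (Hy : R1 <= y) by (unfold y; nra).
  pose proof (log_growth S D R1 k HR1 Hder Hbound y Hy) as Hgrowth.
  rewrite Hln in Hgrowth. replace (k * (2 / k)) with 2 in Hgrowth by (field; lra).
  pose proof (Hin y Hy). pose proof (Hin R1 (Rle_refl R1)). lra.
Qed.

Definition flux_form (S D P Q : R -> R) (R0 : R) : Prop :=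
  forall r, R0 < r ->
    derivable_pt_lim S r (D r) /\ D r = P r / (r * Q r) /\ 0 < Q r /\ 0 < S r < 1.

(* The form is preserved by the reflection S -> 1 - S, P -> -P; this turns
   every statement about positive fluxes into one about negative fluxes. *)
Lemma flux_form_reflect (S D P Q : R -> R) (R0 : R) :
  0 <= R0 -> flux_form S D P Q R0 ->
  flux_form (fun r => 1 - S r) (fun r => - D r) (fun r => - P r) Q R0.
Proof.
  intros HR0 Hform r Hr. destruct (Hform r Hr) as [Hder [HD [HQ HS]]].
  split; [| split; [| split]]; try lra.
  replace (- D r) with (0 - D r) by ring.
  apply (derivable_pt_lim_minus (fct_cte 1) S); [apply derivable_pt_lim_const | exact Hder].
Qed.

(* An eventually positive flux makes S eventually increase, so its limit
   is positive. *)
Lemma flux_pos_lim_pos (S D P Q : R -> R) (R0 s : R) :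
  0 <= R0 -> flux_form S D P Q R0 -> is_lim S p_infty s ->
  Rbar_locally p_infty (fun r => 0 < P r) -> 0 < s.
Proof.
  intros HR0 Hform Hlim [M HM].
  set (R1 := Rmax M R0).
  assert (HM1 : M <= R1) by apply Rmax_l. assert (HR1 : R0 <= R1) by apply Rmax_r.
  assert (Hbelow : S (R1 + 1) <= s).
  { apply (nondecreasing_le_lim S D R1 s); [| | exact Hlim | lra].
    - intros r Hr. apply (Hform r). lra.
    - intros r Hr. destruct (Hform r ltac:(lra)) as [_ [-> [HQ _]]].
      left. apply Rdiv_lt_0_compat; [apply HM; lra | apply Rmult_lt_0_compat; lra]. }
  destruct (Hform (R1 + 1) ltac:(lra)) as [_ [_ [_ HS]]]. lra.
Qed.

Lemma flux_neg_lim_lt1 (S D P Q : R -> R) (R0 s : R) :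
  0 <= R0 -> flux_form S D P Q R0 -> is_lim S p_infty s ->
  Rbar_locally p_infty (fun r => P r < 0) -> s < 1.
Proof.
  intros HR0 Hform Hlim HP.
  assert (0 < 1 - s); [| lra].
  apply (flux_pos_lim_pos _ _ _ _ R0 _ HR0 (flux_form_reflect S D P Q R0 HR0 Hform)).
  - apply is_lim_minus'; [apply is_lim_const | exact Hlim].
  - apply (filter_imp (fun r => P r < 0)); [intros r Hr; lra | exact HP].
Qed.

(* A flux with positive limit and a bounded mobility give S' >= k / r,
   which is impossible for S in (0,1). *)
Lemma flux_lim_not_pos (S D P Q : R -> R) (R0 p B : R) :
  0 <= R0 -> flux_form S D P Q R0 -> is_lim P p_infty p ->
  Rbar_locally p_infty (fun r => Q r <= B) -> ~ 0 < p.
Proof.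
  intros HR0 Hform HP HQB Hp.
  destruct (filter_and _ _ HQB (is_lim_band P p (p / 2) HP ltac:(lra))) as [M HM].
  set (R1 := Rmax M R0 + 1).
  assert (HM1 : M < R1) by (pose proof (Rmax_l M R0); unfold R1; lra).
  assert (HR1 : R0 < R1) by (pose proof (Rmax_r M R0); unfold R1; lra).
  assert (HB : 0 < B).
  { destruct (Hform R1 HR1) as [_ [_ [HQ _]]]. pose proof (proj1 (HM R1 HM1)). lra. }
  apply (no_log_growth_in_01 S D R1 (p / 2 / B)); [lra | apply Rdiv_lt_0_compat; lra | | |].
  - intros r Hr. apply (Hform r). lra.
  - intros r Hr. destruct (Hform r ltac:(lra)) as [_ [-> [HQ _]]].
    destruct (HM r ltac:(lra)) as [HQr HPr].
    replace (p / 2 / B / r) with (p / 2 / (r * B)) by (field; lra).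
    unfold Rdiv. apply Rmult_le_compat; try lra.
    + left. apply Rinv_0_lt_compat. nra.
    + apply Rinv_le_contravar; [nra |]. apply Rmult_le_compat_l; lra.
  - intros r Hr. apply (Hform r). lra.
Qed.

Lemma flux_lim_zero (S D P Q : R -> R) (R0 p B : R) :
  0 <= R0 -> flux_form S D P Q R0 -> is_lim P p_infty p ->
  Rbar_locally p_infty (fun r => Q r <= B) -> p = 0.
Proof.
  intros HR0 Hform HP HQB.
  pose proof (flux_lim_not_pos S D P Q R0 p B HR0 Hform HP HQB).
  assert (~ 0 < - p); [| lra].
  exact (flux_lim_not_pos _ _ _ _ R0 _ B HR0 (flux_form_reflect S D P Q R0 HR0 Hform)
           (is_lim_opp P p_infty p HP) HQB).
Qed.

(* A bound on the interior of [0,1] near a point a passes to a by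
   continuity; the interior points a + lam (1/2 - a) approach a. *)
Lemma cont_on_01_le (f : R -> R) (a c d : R) :
  cont_on_01 f -> 0 <= a <= 1 -> 0 < d ->
  (forall t, 0 < t < 1 -> Rabs (t - a) < d -> f t <= c) -> f a <= c.
Proof.
  intros Hf Ha Hd Hbound. apply Rnot_lt_le. intros Hlt.
  destruct (Hf a Ha (f a - c) ltac:(lra)) as [e [He Hcont]].
  set (lam := Rmin 1 (Rmin e d)).
  assert (Hlam : 0 < lam <= 1)
    by (split; [repeat apply Rmin_pos; lra | apply Rmin_l]).
  assert (Hlam_e : lam <= e) by (eapply Rle_trans; [apply Rmin_r | apply Rmin_l]).
  assert (Hlam_d : lam <= d) by (eapply Rle_trans; [apply Rmin_r | apply Rmin_r]).
  set (t := a + lam * (1 / 2 - a)).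
  assert (Ht : 0 < t < 1) by (unfold t; nra).
  assert (Hta : Rabs (t - a) <= lam / 2) by (apply Rabs_le; unfold t; nra).
  pose proof (Hbound t Ht ltac:(lra)).
  pose proof (Hcont t ltac:(lra) ltac:(lra)) as Hclose.
  apply Rabs_def2 in Hclose. lra.
Qed.

Lemma cont_on_01_opp (f : R -> R) : cont_on_01 f -> cont_on_01 (fun x => - f x).
Proof.
  intros Hf x Hx eps Heps. destruct (Hf x Hx eps Heps) as [d [Hd Hclose]].
  exists d. split; [exact Hd |]. intros y Hy Hyx.
  replace (- f y - - f x) with (- (f y - f x)) by ring.
  rewrite Rabs_Ropp. auto.
Qed.

Lemma strictly_increasing_on_01 (f df : R -> R) :
  cont_on_01 f ->
  (forall x, 0 < x < 1 -> derivable_pt_lim f x (df x)) ->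
  (forall x, 0 < x < 1 -> 0 < df x) ->
  forall x y, 0 <= x -> x < y -> y <= 1 -> f x < f y.
Proof.
  intros Hf Hder Hpos.
  assert (Hinterior : forall x y, 0 < x -> x < y -> y < 1 -> f x < f y).
  { intros x y Hx Hxy Hy.
    destruct (MVT_cor2 f df x y Hxy) as [c [Hc Hcxy]]; [intros; apply Hder; lra |].
    assert (0 < df c * (y - x)) by (apply Rmult_lt_0_compat; [apply Hpos |]; lra).
    lra. }
  intros x y Hx Hxy Hy.
  set (u := x + (y - x) / 3). set (v := x + 2 * (y - x) / 3).
  assert (Hxu : f x <= f u).
  { apply (cont_on_01_le f x (f u) (u - x) Hf); [lra | unfold u; lra |].
    intros t Ht Htx. apply Rabs_def2 in Htx. left. apply Hinterior; unfold u in *; lra. }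
  assert (Hvy : f v <= f y).
  { assert (- f y <= - f v); [| lra].
    apply (cont_on_01_le (fun z => - f z) y (- f v) (y - v) (cont_on_01_opp f Hf));
      [lra | unfold v; lra |].
    intros t Ht Hty. apply Rabs_def2 in Hty.
    assert (f v < f t) by (apply Hinterior; unfold v in *; lra). lra. }
  assert (f u < f v) by (apply Hinterior; unfold u, v; lra).
  lra.
Qed.

Lemma assumptionA_f1_increasing (f1 f2 : R -> R) :
  AssumptionA f1 f2 -> forall x y, 0 <= x -> x < y -> y <= 1 -> f1 x < f1 y.
Proof.
  intros [Hc1 [_ [[df1 [_ [Hd1 [_ [Hp1 _]]]]] _]]].
  exact (strictly_increasing_on_01 f1 df1 Hc1 (fun y Hy => proj1 (Hd1 y Hy)) Hp1).
Qed.

Lemma assumptionA_f2_decreasing (f1 f2 : R -> R) :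
  AssumptionA f1 f2 -> forall x y, 0 <= x -> x < y -> y <= 1 -> f2 y < f2 x.
Proof.
  intros [_ [Hc2 [[_ [df2 [_ [Hd2 [_ Hp2]]]]] _]]] x y Hx Hxy Hy.
  assert (- f2 x < - f2 y); [| lra].
  apply (strictly_increasing_on_01 (fun z => - f2 z) (fun z => - df2 z) (cont_on_01_opp f2 Hc2));
    try lra.
  - intros z Hz. apply derivable_pt_lim_opp, Hd2, Hz.
  - intros z Hz. pose proof (Hp2 z Hz). lra.
Qed.

Lemma assumptionA_f1_pos (f1 f2 : R -> R) :
  AssumptionA f1 f2 -> forall x, 0 < x <= 1 -> 0 < f1 x.
Proof.
  intros HA x Hx. rewrite <- (proj1 (proj2 (proj2 (proj2 HA)))).
  apply (assumptionA_f1_increasing f1 f2 HA); lra.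
Qed.

Lemma assumptionA_f2_pos (f1 f2 : R -> R) :
  AssumptionA f1 f2 -> forall x, 0 <= x < 1 -> 0 < f2 x.
Proof.
  intros HA x Hx. rewrite <- (proj2 (proj2 (proj2 (proj2 HA)))).
  apply (assumptionA_f2_decreasing f1 f2 HA); lra.
Qed.

(* f = f_1 / f_2 is strictly increasing on (0,1), hence injective; this
   makes s* the unique balance point. *)
Lemma ratio_injective (f1 f2 : R -> R) :
  AssumptionA f1 f2 ->
  forall x y, 0 < x < 1 -> 0 < y < 1 -> f1 x / f2 x = f1 y / f2 y -> x = y.
Proof.
  intros HA.
  assert (Hlt : forall x y, 0 < x -> x < y -> y < 1 -> f1 x / f2 x < f1 y / f2 y).
  { intros x y Hx Hxy Hy.
    pose proof (assumptionA_f1_pos f1 f2 HA x ltac:(lra)).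
    pose proof (assumptionA_f2_pos f1 f2 HA y ltac:(lra)).
    pose proof (assumptionA_f1_increasing f1 f2 HA x y ltac:(lra) Hxy ltac:(lra)).
    pose proof (assumptionA_f2_decreasing f1 f2 HA x y ltac:(lra) Hxy ltac:(lra)).
    unfold Rdiv. apply Rlt_le_trans with (f1 y * / f2 x).
    - apply Rmult_lt_compat_r; [apply Rinv_0_lt_compat |]; lra.
    - apply Rmult_le_compat_l; [lra |]. apply Rinv_le_contravar; lra. }
  intros x y Hx Hy Heq.
  destruct (Rtotal_order x y) as [Hxy | [Hxy | Hxy]]; [| exact Hxy |].
  - pose proof (Hlt x y ltac:(lra) Hxy ltac:(lra)). lra.
  - pose proof (Hlt y x ltac:(lra) Hxy ltac:(lra)). lra.
Qed.

Lemma rpow_continuous_0 (al : R) : 0 < al -> continuity_pt (fun u => rpow u al) 0.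
Proof.
  intros Hal eps Heps.
  exists (Rpower eps (/ al)). split; [apply exp_pos |].
  intros u [_ Hu]. simpl in *. unfold R_dist, rpow in *.
  destruct (Rle_dec 0 0) as [_ | H0]; [| lra].
  destruct (Rle_dec u 0) as [_ | Hu0]; [rewrite Rminus_0_r, Rabs_R0; exact Heps |].
  rewrite !Rminus_0_r in *.
  rewrite Rabs_pos_eq in Hu by lra. rewrite Rabs_pos_eq by apply Rlt_le, exp_pos.
  replace eps with (Rpower (Rpower eps (/ al)) al)
    by (rewrite Rpower_mult, Rinv_l, Rpower_1; lra).
  apply Rlt_Rpower_l; lra.
Qed.

Lemma abs_scaled_inv_lim (c : R) : is_lim (fun r => Rabs (c * / r)) p_infty 0.
Proof.
  replace (Finite 0) with (Rbar_abs (Rbar_mult c (Rbar_inv p_infty)))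
    by (simpl; rewrite Rmult_0_r, Rabs_R0; reflexivity).
  apply is_lim_Rabs, is_lim_scal_l, is_lim_inv; [apply is_lim_id | discriminate].
Qed.

Lemma gfun_lim (N : nat) (a al : nat -> R) (c : R) :
  g_admissible N a al ->
  is_lim (fun r => gfun N a al (Rabs (c * / r))) p_infty (a O).
Proof.
  intros [_ [_ [Hal _]]].
  assert (Hterms : forall k, (k <= N)%nat ->
    is_lim (fun r => psum (fun j => a j * rpow (Rabs (c * / r)) (al j)) k) p_infty 0).
  { induction k as [| k IH]; intros Hk; [exact (is_lim_const 0 p_infty) |].
    replace (Finite 0) with (Finite (0 + a (S k) * 0)) by (f_equal; ring).
    apply is_lim_plus'; [apply IH; lia |].
    apply (is_lim_scal_l _ (a (S k)) p_infty 0).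
    assert (Hrpow0 : rpow 0 (al (S k)) = 0)
      by (unfold rpow; destruct (Rle_dec 0 0); lra).
    rewrite <- Hrpow0.
    apply (is_lim_comp_continuous _ (fun u => rpow u (al (S k))) p_infty 0);
      [apply abs_scaled_inv_lim |].
    apply continuity_pt_filterlim, rpow_continuous_0, Hal. lia. }
  unfold gfun. replace (Finite (a O)) with (Finite (a O + 0)) by (f_equal; ring).
  apply is_lim_plus'; [apply is_lim_const | apply Hterms; lia].
Qed.

Lemma lim_comp_cont_on_01 (f u : R -> R) (l : R) :
  cont_on_01 f -> 0 <= l <= 1 -> is_lim u p_infty l ->
  Rbar_locally p_infty (fun r => 0 <= u r <= 1) ->
  is_lim (fun r => f (u r)) p_infty (f l).
Proof.
  intros Hf Hl Hlim Hrange. apply is_lim_spec. intros eps.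
  destruct (Hf l Hl eps (cond_pos eps)) as [d [Hd Hclose]].
  apply (filter_imp (fun r => 0 <= u r <= 1 /\ l - d < u r < l + d)).
  - intros r [Hr Hband]. apply Hclose; [exact Hr |]. apply Rabs_def1; lra.
  - apply filter_and; [exact Hrange | apply is_lim_band; assumption].
Qed.

Lemma opposite_signs_pos (c1 c2 u1 u2 : R) :
  c1 <= 0 -> 0 <= c2 -> c1 ^ 2 + c2 ^ 2 > 0 -> 0 < u1 -> 0 < u2 ->
  0 < c2 * u1 - c1 * u2.
Proof. intros. destruct (Req_dec c1 0); subst; nra. Qed.

Section IVP.

Variables (N1 N2 : nat) (a1 al1 a2 al2 : nat -> R) (f1 f2 pc dpc : R -> R)
  (c1 c2 r0 s0 : R) (S : R -> R) (s : R).

Hypothesis Hg1 : g_admissible N1 a1 al1.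
Hypothesis Hg2 : g_admissible N2 a2 al2.
Hypothesis HA : AssumptionA f1 f2.
Hypothesis HB : AssumptionB pc dpc.
Hypothesis Hr0 : 0 < r0.
Hypothesis HS : IVP_solution_n2 N1 N2 a1 al1 a2 al2 f1 f2 dpc c1 c2 r0 s0 S.
Hypothesis Hlim : is_lim S p_infty s.

Definition rhs (r : R) : R :=
  Gfun N2 a2 al2 (c2 * / r) * Ffun dpc f2 (S r) - Gfun N1 a1 al1 (c1 * / r) * Ffun dpc f1 (S r).

Definition weight2 (r : R) : R := gfun N2 a2 al2 (Rabs (c2 * / r)) * f1 (S r).
Definition weight1 (r : R) : R := gfun N1 a1 al1 (Rabs (c1 * / r)) * f2 (S r).
Definition flux (r : R) : R := c2 * weight2 r - c1 * weight1 r.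
Definition mobility (r : R) : R := dpc (S r) * f1 (S r) * f2 (S r).
Definition limit_flux (x : R) : R := c2 * (a2 O * f1 x) - c1 * (a1 O * f2 x).

Lemma solution_in_01 : forall r, r0 <= r -> 0 < S r < 1.
Proof. exact (proj1 (proj2 HS)). Qed.

Lemma ivp_flux_form : flux_form S rhs flux mobility r0.
Proof.
  intros r Hr. destruct HS as [_ [_ [_ Hder]]].
  pose proof (solution_in_01 r ltac:(lra)) as HSr.
  pose proof (assumptionA_f1_pos f1 f2 HA (S r) ltac:(lra)).
  pose proof (assumptionA_f2_pos f1 f2 HA (S r) ltac:(lra)).
  pose proof (proj2 (proj2 HB) (S r) HSr).
  split; [apply Hder, Hr | split; [| split; [| exact HSr]]].
  - unfold rhs, flux, weight1, weight2, mobility, Gfun, Ffun. field. repeat split; lra.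
  - unfold mobility. repeat apply Rmult_lt_0_compat; assumption.
Qed.

Lemma solution_eventually_in_01 : Rbar_locally p_infty (fun r => 0 <= S r <= 1).
Proof. exists r0. intros r Hr. pose proof (solution_in_01 r ltac:(lra)). lra. Qed.

Lemma limit_in_01 : 0 <= s <= 1.
Proof.
  split.
  - apply (is_lim_le_loc (fun _ => 0) S p_infty 0 s); [| apply is_lim_const | exact Hlim].
    apply (filter_imp _ _ (fun r Hr => proj1 Hr) solution_eventually_in_01).
  - apply (is_lim_le_loc S (fun _ => 1) p_infty s 1); [| exact Hlim | apply is_lim_const].
    apply (filter_imp _ _ (fun r Hr => proj2 Hr) solution_eventually_in_01).
Qed.

Lemma composed_lim (f : R -> R) : cont_on_01 f -> is_lim (fun r => f (S r)) p_infty (f s).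
Proof.
  intros Hf. exact (lim_comp_cont_on_01 f S s Hf limit_in_01 Hlim solution_eventually_in_01).
Qed.

Lemma flux_lim : is_lim flux p_infty (limit_flux s).
Proof.
  destruct HA as [Hc1 [Hc2 _]].
  apply is_lim_minus'; apply (is_lim_scal_l _ _ p_infty (Finite _)); apply is_lim_mult_fin;
    solve [apply gfun_lim; assumption | apply composed_lim; assumption].
Qed.

Lemma weights_eventually_pos :
  Rbar_locally p_infty (fun r => 0 < weight2 r /\ 0 < weight1 r).
Proof.
  pose proof Hg1 as [Ha1 _]. pose proof Hg2 as [Ha2 _].
  pose proof (is_lim_band _ _ (a2 O / 2) (gfun_lim N2 a2 al2 c2 Hg2) ltac:(lra)) as Hgfun2.
  pose proof (is_lim_band _ _ (a1 O / 2) (gfun_lim N1 a1 al1 c1 Hg1) ltac:(lra)) as Hgfun1.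
  assert (Hfar : Rbar_locally p_infty (fun r => r0 <= r)) by (exists r0; intros; lra).
  refine (filter_imp _ _ _ (filter_and _ _ Hfar (filter_and _ _ Hgfun2 Hgfun1))).
  intros r [Hr [Hb2 Hb1]]. pose proof (solution_in_01 r Hr) as HSr.
  pose proof (assumptionA_f1_pos f1 f2 HA (S r) ltac:(lra)).
  pose proof (assumptionA_f2_pos f1 f2 HA (S r) ltac:(lra)).
  unfold weight1, weight2. split; apply Rmult_lt_0_compat; lra.
Qed.

(* For an interior limit the mobility converges, hence stays bounded;
   here the continuity of p_c' at s is used. *)
Lemma mobility_bounded :
  0 < s < 1 -> Rbar_locally p_infty (fun r => mobility r <= dpc s * f1 s * f2 s + 1).
Proof.
  intros Hs. destruct HA as [Hc1 [Hc2 _]]. destruct HB as [_ [[ddpc Hddpc] _]].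
  assert (Hcont : continuous dpc s).
  { apply continuity_pt_filterlim.
    exact (derivable_continuous_pt dpc s (exist _ (ddpc s) (proj1 (Hddpc s Hs)))). }
  assert (Hmob : is_lim mobility p_infty (dpc s * f1 s * f2 s)).
  { repeat apply is_lim_mult_fin;
      [exact (is_lim_comp_continuous S dpc p_infty s Hlim Hcont) | apply composed_lim ..];
      assumption. }
  apply (filter_imp (fun r => dpc s * f1 s * f2 s - 1 < mobility r < dpc s * f1 s * f2 s + 1));
    [intros r Hr; lra | apply is_lim_band; [exact Hmob | lra]].
Qed.

Lemma interior_limit_balanced : 0 < s < 1 -> limit_flux s = 0.
Proof.
  intros Hs.
  exact (flux_lim_zero S rhs flux mobility r0 (limit_flux s) _ ltac:(lra) ivp_flux_form flux_lim
           (mobility_bounded Hs)).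
Qed.

Lemma limit_weights_pos (x : R) : 0 < x < 1 -> 0 < a2 O * f1 x /\ 0 < a1 O * f2 x.
Proof.
  intros Hx. pose proof Hg1 as [Ha1 _]. pose proof Hg2 as [Ha2 _].
  pose proof (assumptionA_f1_pos f1 f2 HA x ltac:(lra)).
  pose proof (assumptionA_f2_pos f1 f2 HA x ltac:(lra)).
  split; apply Rmult_lt_0_compat; assumption.
Qed.

Lemma limit_flux_pos : 0 < limit_flux s -> s = 1.
Proof.
  intros Hp.
  assert (Hs0 : 0 < s)
    by exact (flux_pos_lim_pos S rhs flux mobility r0 s ltac:(lra) ivp_flux_form Hlim
                (is_lim_eventually_pos _ _ flux_lim Hp)).
  destruct (Req_dec s 1) as [Hs1 | Hs1]; [exact Hs1 | exfalso].
  pose proof limit_in_01. pose proof (interior_limit_balanced ltac:(lra)). lra.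
Qed.

Lemma limit_flux_neg : limit_flux s < 0 -> s = 0.
Proof.
  intros Hp.
  assert (Hs1 : s < 1)
    by exact (flux_neg_lim_lt1 S rhs flux mobility r0 s ltac:(lra) ivp_flux_form Hlim
                (is_lim_eventually_neg _ _ flux_lim Hp)).
  destruct (Req_dec s 0) as [Hs0 | Hs0]; [exact Hs0 | exfalso].
  pose proof limit_in_01. pose proof (interior_limit_balanced ltac:(lra)). lra.
Qed.

Lemma interior_limit_is_sstar (sstar : R) :
  0 < s < 1 -> c2 <> 0 -> 0 < sstar < 1 ->
  f1 sstar / f2 sstar = c1 * a1 O / (c2 * a2 O) -> s = sstar.
Proof.
  intros Hs Hc2 Hss Hratio. apply (ratio_injective f1 f2 HA s sstar Hs Hss).
  rewrite Hratio.
  pose proof (interior_limit_balanced Hs) as Hbal. unfold limit_flux in Hbal.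
  pose proof (assumptionA_f2_pos f1 f2 HA s ltac:(lra)).
  pose proof Hg2 as [Ha2 _].
  field_simplify_eq; [nra | repeat split; lra].
Qed.

Lemma limit_when_c1_nonpos_c2_nonneg : c1 <= 0 -> 0 <= c2 -> c1 ^ 2 + c2 ^ 2 > 0 -> s = 1.
Proof.
  intros Hc1 Hc2 Hc.
  assert (Hs0 : 0 < s).
  { apply (flux_pos_lim_pos S rhs flux mobility r0 s ltac:(lra) ivp_flux_form Hlim).
    refine (filter_imp _ _ _ weights_eventually_pos). intros r [Hw2 Hw1].
    unfold flux. apply opposite_signs_pos; assumption. }
  destruct (Req_dec s 1) as [Hs1 | Hs1]; [exact Hs1 | exfalso].
  pose proof limit_in_01 as Hs01.
  pose proof (interior_limit_balanced ltac:(lra)) as Hbal.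
  destruct (limit_weights_pos s ltac:(lra)) as [Hw2 Hw1].
  pose proof (opposite_signs_pos c1 c2 _ _ Hc1 Hc2 Hc Hw2 Hw1). unfold limit_flux in Hbal. lra.
Qed.

Lemma limit_when_c1_nonneg_c2_nonpos : 0 <= c1 -> c2 <= 0 -> c1 ^ 2 + c2 ^ 2 > 0 -> s = 0.
Proof.
  intros Hc1 Hc2 Hc.
  assert (Hc' : c2 ^ 2 + c1 ^ 2 > 0) by lra.
  assert (Hs1 : s < 1).
  { apply (flux_neg_lim_lt1 S rhs flux mobility r0 s ltac:(lra) ivp_flux_form Hlim).
    refine (filter_imp _ _ _ weights_eventually_pos). intros r [Hw2 Hw1].
    pose proof (opposite_signs_pos c2 c1 _ _ Hc2 Hc1 Hc' Hw1 Hw2). unfold flux. lra. }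
  destruct (Req_dec s 0) as [Hs0 | Hs0]; [exact Hs0 | exfalso].
  pose proof limit_in_01 as Hs01.
  pose proof (interior_limit_balanced ltac:(lra)) as Hbal.
  destruct (limit_weights_pos s ltac:(lra)) as [Hw2 Hw1].
  pose proof (opposite_signs_pos c2 c1 _ _ Hc2 Hc1 Hc' Hw1 Hw2). unfold limit_flux in Hbal. lra.
Qed.

(* Case (iii): pi(0) > 0 and pi(1) < 0 exclude both endpoints. *)
Lemma limit_when_c1_c2_neg :
  c1 < 0 -> c2 < 0 -> forall sstar, 0 < sstar < 1 ->
  f1 sstar / f2 sstar = c1 * a1 O / (c2 * a2 O) -> s = sstar.
Proof.
  intros Hc1 Hc2 sstar Hss Hratio.
  pose proof HA as (_ & _ & _ & Hf10 & Hf21).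
  pose proof Hg1 as [Ha1 _]. pose proof Hg2 as [Ha2 _].
  pose proof limit_in_01 as Hs01.
  assert (Hs0 : s <> 0).
  { intros Hs0. pose proof (assumptionA_f2_pos f1 f2 HA 0 ltac:(lra)).
    assert (Hw : 0 < a1 O * f2 0) by (apply Rmult_lt_0_compat; lra).
    assert (Hp : 0 < limit_flux s) by (unfold limit_flux; rewrite Hs0, Hf10; nra).
    pose proof (limit_flux_pos Hp). lra. }
  assert (Hs1 : s <> 1).
  { intros Hs1. pose proof (assumptionA_f1_pos f1 f2 HA 1 ltac:(lra)).
    assert (Hw : 0 < a2 O * f1 1) by (apply Rmult_lt_0_compat; lra).
    assert (Hn : limit_flux s < 0) by (unfold limit_flux; rewrite Hs1, Hf21; nra).
    pose proof (limit_flux_neg Hn). lra. }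
  apply interior_limit_is_sstar; lra.
Qed.

Lemma limit_when_c1_c2_pos :
  0 < c1 -> 0 < c2 -> forall sstar, 0 < sstar < 1 ->
  f1 sstar / f2 sstar = c1 * a1 O / (c2 * a2 O) -> s = 0 \/ s = 1 \/ s = sstar.
Proof.
  intros Hc1 Hc2 sstar Hss Hratio. pose proof limit_in_01 as Hs01.
  destruct (Req_dec s 0) as [Hs0 | Hs0]; [left; exact Hs0 |].
  destruct (Req_dec s 1) as [Hs1 | Hs1]; [right; left; exact Hs1 |].
  right; right. apply interior_limit_is_sstar; lra.
Qed.

End IVP.

Theorem theorem2p5
  (N1 N2 : nat) (a1 al1 a2 al2 : nat -> R)
  (f1 f2 pc dpc : R -> R)
  (c1 c2 r0 s0 : R) (S : R -> R) (s_inf : R) :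
  g_admissible N1 a1 al1 ->
  g_admissible N2 a2 al2 ->
  AssumptionA f1 f2 ->
  AssumptionB pc dpc ->
  c1 ^ 2 + c2 ^ 2 > 0 ->
  0 < r0 ->
  0 < s0 < 1 ->
  IVP_solution_n2 N1 N2 a1 al1 a2 al2 f1 f2 dpc c1 c2 r0 s0 S ->
  lim_at_infty S s_inf ->
  ((c1 <= 0 /\ c2 >= 0) -> s_inf = 1) /\
  ((c1 >= 0 /\ c2 <= 0) -> s_inf = 0) /\
  ((c1 < 0 /\ c2 < 0) ->
     forall sstar, 0 < sstar < 1 ->
       f1 sstar / f2 sstar = c1 * a1 O / (c2 * a2 O) -> s_inf = sstar) /\
  ((c1 > 0 /\ c2 > 0) ->
     forall sstar, 0 < sstar < 1 ->
       f1 sstar / f2 sstar = c1 * a1 O / (c2 * a2 O) ->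
       s_inf = 0 \/ s_inf = 1 \/ s_inf = sstar).
Proof.
  intros Hg1 Hg2 HA HB Hc Hr0 _ HS Hlim.
  apply lim_at_infty_is_lim in Hlim.
  split; [| split; [| split]]; intros [Hc1 Hc2].
  - exact (limit_when_c1_nonpos_c2_nonneg _ _ _ _ _ _ _ _ _ _ _ _ _ _ _ _
             Hg1 Hg2 HA HB Hr0 HS Hlim Hc1 ltac:(lra) Hc).
  - exact (limit_when_c1_nonneg_c2_nonpos _ _ _ _ _ _ _ _ _ _ _ _ _ _ _ _
             Hg1 Hg2 HA HB Hr0 HS Hlim ltac:(lra) Hc2 Hc).
  - exact (limit_when_c1_c2_neg _ _ _ _ _ _ _ _ _ _ _ _ _ _ _ _ Hg1 Hg2 HA HB Hr0 HS Hlim Hc1 Hc2).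
  - exact (limit_when_c1_c2_pos _ _ _ _ _ _ _ _ _ _ _ _ _ _ _ _ Hg1 Hg2 HA HB Hr0 HS Hlim Hc1 Hc2).
Qed.
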